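(* Let $m\ge1$ and $n\ge1$ be integers, $m_1,\dots,m_n\ge1$ integers, $\alpha_0,\dots,\alpha_{m-1}$ nonnegative reals, $\gamma_1<\gamma_2<\cdots<\gamma_n$ nonnegative reals, and $\beta_k^{(j)}$ ($1\le j\le n$, $1\le k\le m_j$) positive reals. Let $$q(x)=x^m-\alpha_{m-1}x^{m-1}-\cdots-\alpha_1x-\alpha_0-\sum_{j=1}^n\sum_{k=1}^{m_j}\frac{\beta_k^{(j)}}{(x-\gamma_j)^k}.$$ Then $q$ has a real zero $R$ with $R>\gamma_n$. *)

From mathcomp Require Import all_boot all_order all_algebra.
From mathcomp Require Import reals.
Set Implicit Arguments. Unset Strict Implicit. Unset Printing Implicit Defensive.
Import Order.TTheory GRing.Theory Num.Theory.
Local Open Scope ring_scope.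

Definition qfun (R : realType) (m n : nat) (alpha : nat -> R)
  (mj : 'I_n -> nat) (gamma : 'I_n -> R) (beta : 'I_n -> nat -> R) (x : R) : R :=
  x ^+ m - \sum_(i < m) alpha i * x ^+ i
  - \sum_(j < n) \sum_(1 <= k < (mj j).+1) beta j k / (x - gamma j) ^+ k.

From mathcomp Require Import all_boot all_order all_algebra.
From mathcomp Require Import boolp classical_sets reals topology normedtype.
From mathcomp Require Import realfun.
Import Order.TTheory GRing.Theory Num.Theory.
Import numFieldNormedType.Exports.
Local Open Scope ring_scope.
Local Open Scope classical_set_scope.

(* q is continuous on (gamma_n, +oo).  As the alpha_i and beta_k^(j) are
   nonnegative, q(x) <= x^m - beta_1^(n) / (x - gamma_n) there, which tends to
   -oo as x decreases to gamma_n.  Once x - gamma_j >= 1 for all j,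
   q(x) >= x^(m-1) (x - A) - B >= x - A - B with A = sum alpha_i and
   B = sum beta_k^(j), so q is positive for large x.  The intermediate value
   theorem gives the zero. *)

Lemma continuous_sum {K : numFieldType} {V : normedModType K}
    {T : topologicalType} {I : Type} (s : seq I) (P : pred I)
    (F : I -> T -> V) (x : T) :
  (forall i, P i -> {for x, continuous (F i)}) ->
  {for x, continuous (fun y => \sum_(i <- s | P i) F i y)}.
Proof. by move=> Fx; apply: cvg_big => //; exact: add_continuous. Qed.

Lemma continuous_qfun (R : realType) (m n : nat) (alpha : nat -> R)
    (mj : 'I_n -> nat) (gamma : 'I_n -> R) (beta : 'I_n -> nat -> R) (x : R) :
  (forall j, x != gamma j) -> {for x, continuous (qfun m alpha mj gamma beta)}.
Proof.
move=> x_neq_pole; rewrite /qfun; apply: continuousB; first apply: continuousB.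
- exact: exprn_continuous.
- apply: continuous_sum => i _; apply: continuousM; first exact: cst_continuous.
  exact: exprn_continuous.
- apply: continuous_sum => j _; apply: continuous_sum => k _.
  apply: continuousM; first exact: cst_continuous.
  apply: continuousV; first by rewrite expf_neq0 // subr_eq0.
  apply: (continuous_comp (f := fun y => y - gamma j) (g := fun z => z ^+ k)).
    by apply: continuousB; [exact: cvg_id | exact: cst_continuous].
  exact: exprn_continuous.
Qed.

Lemma IVT_sign_change {R : realType} {f : R -> R} {a b : R} :
  a <= b -> {within `[a, b], continuous f} -> f a <= 0 -> 0 <= f b ->
  exists2 c, a <= c <= b & f c = 0.
Proof.
move=> le_ab f_cont fa_le0 fb_ge0.
have [|c /itvP c_in fc] := IVT le_ab f_cont (v := 0).
  by rewrite ge_min le_max fa_le0 fb_ge0 orbT.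
by exists c; rewrite ?c_in.
Qed.

Lemma le_last_ord {d} {T : porderType d} {n : nat} (f : 'I_n -> T)
    (lt_last : (n.-1 < n)%N) :
  (forall i j : 'I_n, (i < j)%N -> (f i < f j)%O) ->
  forall j, (f j <= f (Ordinal lt_last))%O.
Proof.
move=> f_incr j; have [lt_j_last|le_last_j] := ltnP j n.-1.
  exact/ltW/f_incr.
have -> // : j = Ordinal lt_last.
apply/val_inj/eqP; rewrite /= eqn_leq le_last_j andbT -ltnS prednK ?ltn_ord //.
exact: leq_ltn_trans (leq0n _) lt_last.
Qed.

Section qfun_sign.
Context {R : realType} {m n : nat} {alpha : nat -> R} {mj : 'I_n -> nat}
  {gamma : 'I_n -> R} {beta : 'I_n -> nat -> R} {top : 'I_n}.
Hypothesis alpha_ge0 : forall i, (i < m)%N -> 0 <= alpha i.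
Hypothesis beta_gt0 : forall j k, (1 <= k <= mj j)%N -> 0 < beta j k.
Hypothesis gamma_le_top : forall j, gamma j <= gamma top.
Hypothesis gamma_top_ge0 : 0 <= gamma top.
Hypothesis mj_top_ge1 : (1 <= mj top)%N.

Local Notation q := (qfun m alpha mj gamma beta).
Local Notation g := (gamma top).

Lemma poly_part_ge0 x : 0 <= x -> 0 <= \sum_(i < m) alpha i * x ^+ i.
Proof.
move=> x_ge0; apply: sumr_ge0 => i _.
by apply: mulr_ge0; [exact: alpha_ge0 | exact: exprn_ge0].
Qed.

Lemma pole_term_ge0 j k x :
  g < x -> (1 <= k <= mj j)%N -> 0 <= beta j k / (x - gamma j) ^+ k.
Proof.
move=> g_lt_x k_range; apply: divr_ge0; first exact/ltW/beta_gt0.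
by rewrite exprn_ge0 // subr_ge0 ltW // (le_lt_trans (gamma_le_top j)).
Qed.

Lemma pole_part_ge0 j x :
  g < x -> 0 <= \sum_(1 <= k < (mj j).+1) beta j k / (x - gamma j) ^+ k.
Proof.
move=> g_lt_x; rewrite big_nat_cond; apply: sumr_ge0 => k /andP[k_range _].
by apply: pole_term_ge0; rewrite // -ltnS.
Qed.

Lemma qfun_le_top_pole x : g < x -> q x <= x ^+ m - beta top 1 / (x - g).
Proof.
move=> g_lt_x; apply: lerB.
  by rewrite gerBl poly_part_ge0 // (le_trans gamma_top_ge0) ?ltW.
rewrite (bigD1 top) //= big_ltn ?ltnS // expr1 -addrA lerDl addr_ge0 //.
  rewrite big_nat_cond; apply: sumr_ge0 => k /andP[/andP[k_gt1 k_le] _].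
  by apply: pole_term_ge0; rewrite // (ltnW k_gt1) -ltnS.
by apply: sumr_ge0 => j _; apply: pole_part_ge0.
Qed.

(* With P = (g + 1)^m, the point g + e with e = b1 / (b1 + P) <= 1
   gives q <= P - (b1 + P) < 0. *)
Lemma qfun_lt0_right_of_top : exists2 a, g < a & q a < 0.
Proof.
set b1 := beta top 1; set P := (g + 1) ^+ m.
have b1_gt0 : 0 < b1 by rewrite beta_gt0 // lexx mj_top_ge1.
have P_ge0 : 0 <= P by rewrite exprn_ge0 // addr_ge0.
set e := b1 / (b1 + P).
have e_gt0 : 0 < e by rewrite divr_gt0 // ltr_wpDr.
have e_le1 : e <= 1 by rewrite ler_pdivrMr ?ltr_wpDr // mul1r lerDl.
have g_lt_a : g < g + e by rewrite ltrDl.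
exists (g + e) => //.
apply: (le_lt_trans (qfun_le_top_pole _ g_lt_a)).
have -> : g + e - g = e by rewrite addrC addKr.
have -> : b1 / e = b1 + P by rewrite /e invf_div mulrC divfK ?gt_eqF.
rewrite subr_lt0.
apply: (le_lt_trans (y := P)); last by rewrite ltrDr.
by rewrite lerXn2r ?nnegrE ?addr_ge0 ?(ltW e_gt0) // lerD2l.
Qed.

Lemma poly_part_le x : (0 < m)%N -> 1 <= x ->
  \sum_(i < m) alpha i * x ^+ i <= (\sum_(i < m) alpha i) * x ^+ m.-1.
Proof.
move=> m_gt0 x_ge1; rewrite mulr_suml; apply: ler_sum => i _.
by rewrite ler_wpM2l ?alpha_ge0 // ler_weXn2l // -ltnS prednK.
Qed.

Lemma pole_part_le x : g + 1 <= x ->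
  \sum_(j < n) \sum_(1 <= k < (mj j).+1) beta j k / (x - gamma j) ^+ k
  <= \sum_(j < n) \sum_(1 <= k < (mj j).+1) beta j k.
Proof.
move=> x_ge; apply: ler_sum => j _.
rewrite big_nat_cond [leRHS]big_nat_cond; apply: ler_sum => k /andP[k_range _].
have dist_ge1 : 1 <= x - gamma j.
  by rewrite lerBrDr (le_trans _ x_ge) // addrC lerD2r.
rewrite ler_pdivrMr ?exprn_gt0 ?(lt_le_trans ltr01) //.
by rewrite ler_peMr ?exprn_ege1 // ltW // beta_gt0 // -ltnS.
Qed.

Lemma qfun_gt0_large : (0 < m)%N -> exists M, forall x, M < x -> 0 < q x.
Proof.
move=> m_gt0; set A := \sum_(i < m) alpha i.
set B := \sum_(j < n) \sum_(1 <= k < (mj j).+1) beta j k.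
have A_ge0 : 0 <= A by apply: sumr_ge0 => i _; apply: alpha_ge0.
have B_ge0 : 0 <= B.
  apply: sumr_ge0 => j _; rewrite big_nat_cond; apply: sumr_ge0.
  by move=> k /andP[k_range _]; rewrite ltW // beta_gt0 // -ltnS.
exists (g + 1 + A + B) => x x_gt.
have AB_lt_x : A + B < x by rewrite (le_lt_trans _ x_gt) // -addrA lerDr addr_ge0.
have x_ge : g + 1 <= x by rewrite (le_trans _ (ltW x_gt)) // -addrA lerDl addr_ge0.
have x_ge1 : 1 <= x by rewrite (le_trans _ x_ge) // lerDr.
have lower : x - A - B <= q x.
  rewrite /qfun; apply: lerB; last exact: pole_part_le.
  apply: le_trans (lerB (lexx _) (poly_part_le _ m_gt0 x_ge1)).
  rewrite -{1}(prednK m_gt0) exprS -mulrBl ler_peMr ?exprn_ege1 //.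
  by rewrite subr_ge0 (le_trans _ (ltW AB_lt_x)) ?lerDl.
by apply: lt_le_trans lower; rewrite subr_gt0 ltrBrDr addrC.
Qed.

End qfun_sign.

Theorem lemma3p7 (R : realType) (m n : nat) (alpha : nat -> R)
  (mj : 'I_n -> nat) (gamma : 'I_n -> R) (beta : 'I_n -> nat -> R)
  (hm : (1 <= m)%N) (hn : (0 < n)%N)
  (hmj : forall j, (1 <= mj j)%N)
  (halpha : forall i, (i < m)%N -> 0 <= alpha i)
  (hgamma0 : forall j, 0 <= gamma j)
  (hgamma : forall i j : 'I_n, (i < j)%N -> gamma i < gamma j)
  (hbeta : forall j k, (1 <= k <= mj j)%N -> 0 < beta j k) :
  exists Rz : R,
    (forall jn : 'I_n, nat_of_ord jn = n.-1 -> gamma jn < Rz) /\ qfun m alpha mj gamma beta Rz = 0.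
Proof.
have lt_last : (n.-1 < n)%N by rewrite prednK.
set top := Ordinal lt_last.
have gamma_le_top := le_last_ord gamma lt_last hgamma.
have [a top_lt_a qa_lt0] :=
  qfun_lt0_right_of_top halpha hbeta gamma_le_top (hgamma0 top) (hmj top).
have [M qfun_gt0] := qfun_gt0_large halpha hbeta gamma_le_top (hgamma0 top) hm.
set b := Num.max a (M + 1).
have a_le_b : a <= b by rewrite le_max lexx.
have qb_gt0 : 0 < qfun m alpha mj gamma beta b.
  by apply: qfun_gt0; rewrite lt_max ltrDl ltr01 orbT.
have q_cont : {within `[a, b], continuous (qfun m alpha mj gamma beta)}.
  apply: continuous_in_subspaceT => x /set_mem /itvP x_in.
  apply: continuous_qfun => j; rewrite gt_eqF // (le_lt_trans (gamma_le_top j)) //.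
  by rewrite (lt_le_trans top_lt_a) ?x_in.
have [c /andP[a_le_c _] qc] := IVT_sign_change a_le_b q_cont (ltW qa_lt0) (ltW qb_gt0).
exists c; split => // jn jn_last; have -> : jn = top by apply: val_inj.
exact: lt_le_trans top_lt_a a_le_c.
Qed.
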